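(* Let $(\mathcal C,\otimes,\mathbb I)$ be a monoidal category with pushouts and $(H,\Delta,\varepsilon)$ a coalgebra in $\mathcal C$ such that $V\otimes\varepsilon:V\otimes H\to V$ is an epimorphism for every object $V$ of $\mathcal C$. For each $V$, let $T(V)=(V,V,V\otimes\varepsilon,\mathrm{id}_V)$ be the trivial geometric partial comodule. Then $T(V)$ is globalizable for every $V$, with globalization the free comodule $(V\otimes H,V\otimes\Delta)$ (with $p=V\otimes\varepsilon$); thus $T$ defines a functor $\mathcal C\to\mathsf{PCom}^H_{gl}$. Moreover, with $U:\mathsf{PCom}^H_{gl}\to\mathcal C$ the forgetful functor, $\mathcal J:\mathsf{Com}^H\to\mathsf{PCom}^H_{gl}$ the embedding and $\mathcal G:\mathsf{PCom}^H_{gl}\to\mathsf{Com}^H$ its right adjoint (globalization), the composite $U\circ\mathcal J$ equals the forgetful functor $\mathsf{Com}^H\to\mathcal C$ and $\mathcal G\circ T$ is naturally isomorphic to the free comodule functor $-\otimes H:\mathcal C\to\mathsf{Com}^H$. That is, the free–forgetful adjunction between $\mathcal C$ and $\mathsf{Com}^H$ factors through $\mathsf{PCom}^H_{gl}$ via the adjunctions $U\dashv T$ and $\mathcal J\dashv\mathcal G$.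
   Context: $\mathcal C$ is treated as strict monoidal; the identity of an object $X$ is also written $X$. $\mathsf{Com}^H$ is the category of right $H$-comodules $(Y,\delta)$. A partial comodule datum is $(X,X\bullet H,\pi_X,\rho_X)$ with $\rho_X:X\to X\bullet H$ and $\pi_X:X\otimes H\to X\bullet H$ an epimorphism. For such a datum let: $(X\bullet H)\bullet H$ be the pushout of $\pi_X$ and $\rho_X\otimes H$, with coprojections $\rho_X\bullet H$ and $\pi_{X\bullet H}$; $X\bullet(H\otimes H)$ the pushout of $\pi_X$ and $X\otimes\Delta$, with coprojections $X\bullet\Delta$ and $\pi_{X,\Delta}:X\otimes H\otimes H\to X\bullet(H\otimes H)$; $X\bullet(H\bullet H)$ the pushout of $\pi_{X,\Delta}$ and $\pi_X\otimes H$, with coprojections $\pi'_X$ and $\pi'_{X,\Delta}$. A geometric partial $H$-comodule is a datum such that (GP1) there is $X\bullet\varepsilon:X\bullet H\to X$ with $(X\bullet\varepsilon)\circ\rho_X=\mathrm{id}_X$ and $(X\bullet\varepsilon)\circ\pi_X=X\otimes\varepsilon$; (GP2) there is an isomorphism $\theta:X\bullet(H\bullet H)\to(X\bullet H)\bullet H$ with $\theta\circ\pi'_{X,\Delta}=\pi_{X\bullet H}$ and $(\rho_X\bullet H)\circ\rho_X=\theta\circ\pi'_X\circ(X\bullet\Delta)\circ\rho_X$. Morphisms $X\to X'$ are pairs $(f,f\bullet H)$ with $\rho_{X'}\circ f=(f\bullet H)\circ\rho_X$ and $\pi_{X'}\circ(f\otimes H)=(f\bullet H)\circ\pi_X$;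 category $\mathsf{PCom}^H$. A global comodule $(Y,\delta)$ gives $\mathcal I(Y)=(Y,Y\otimes H,\mathrm{id},\delta)$; a morphism $\mathcal I(Y)\to X$ is a $g:Y\to X$ in $\mathcal C$ with $\pi_X\circ(g\otimes H)\circ\delta=\rho_X\circ g$. A globalization of $X$ is a global comodule $(Y,\delta)$ with $p:Y\to X$ in $\mathcal C$ such that (GL1) $p$ is a morphism $\mathcal I(Y)\to X$; (GL2) $X\bullet H$ with $\rho_X,\pi_X$ is a pushout of $p$ and $(p\otimes H)\circ\delta$; (GL3) for every global $(Z,\delta')$ and morphism $q:\mathcal I(Z)\to X$ there is a unique comodule morphism $\eta:Z\to Y$ with $p\circ\eta=q$. $\mathsf{PCom}^H_{gl}$ is the full subcategory of globalizable geometric partial comodules; $\mathcal I$ corestricts to a fully faithful $\mathcal J:\mathsf{Com}^H\to\mathsf{PCom}^H_{gl}$, which has a right adjoint $\mathcal G$ sending $X$ to its globalization (the equalizer in $\mathsf{Com}^H$ of $\rho_X\otimes H$ and $(\pi_X\otimes H)\circ(X\otimes\Delta)$). Under the hypothesis on $\varepsilon$, $T(V)=(V,V\bullet H=V,\pi_V=V\otimes\varepsilon,\rho_V=\mathrm{id}_V)$ is a geometric partial comodule and $T$ is right adjoint to the forgetful functor $\mathsf{PCom}^H\to\mathcal C$ (known facts). *)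

Set Implicit Arguments.

Record MonCat := {
  Ob : Type;
  Hom : Ob -> Ob -> Type;
  idm : forall X, Hom X X;
  comp : forall X Y Z, Hom Y Z -> Hom X Y -> Hom X Z;
  comp_idl : forall X Y (f : Hom X Y), comp (idm Y) f = f;
  comp_idr : forall X Y (f : Hom X Y), comp f (idm X) = f;
  comp_assoc : forall X Y Z W (h : Hom Z W) (g : Hom Y Z) (f : Hom X Y),
      comp h (comp g f) = comp (comp h g) f;
  tens : Ob -> Ob -> Ob;
  tensm : forall X X' Y Y', Hom X X' -> Hom Y Y' -> Hom (tens X Y) (tens X' Y');
  tensm_id : forall X Y, tensm (idm X) (idm Y) = idm (tens X Y);
  tensm_comp : forall X X' X'' Y Y' Y''
      (f' : Hom X' X'') (f : Hom X X') (g' : Hom Y' Y'') (g : Hom Y Y'),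
      tensm (comp f' f) (comp g' g) = comp (tensm f' g') (tensm f g);
  unit : Ob;
  assoc : forall X Y Z, Hom (tens (tens X Y) Z) (tens X (tens Y Z));
  assoc_inv : forall X Y Z, Hom (tens X (tens Y Z)) (tens (tens X Y) Z);
  assoc_inv_l : forall X Y Z, comp (assoc_inv X Y Z) (assoc X Y Z) = idm _;
  assoc_inv_r : forall X Y Z, comp (assoc X Y Z) (assoc_inv X Y Z) = idm _;
  assoc_nat : forall X X' Y Y' Z Z' (f : Hom X X') (g : Hom Y Y') (h : Hom Z Z'),
      comp (assoc X' Y' Z') (tensm (tensm f g) h)
      = comp (tensm f (tensm g h)) (assoc X Y Z);
  lunit : forall X, Hom (tens unit X) X;
  lunit_inv : forall X, Hom X (tens unit X);
  lunit_inv_l : forall X, comp (lunit_inv X) (lunit X) = idm _;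
  lunit_inv_r : forall X, comp (lunit X) (lunit_inv X) = idm _;
  lunit_nat : forall X X' (f : Hom X X'),
      comp (lunit X') (tensm (idm unit) f) = comp f (lunit X);
  runit : forall X, Hom (tens X unit) X;
  runit_inv : forall X, Hom X (tens X unit);
  runit_inv_l : forall X, comp (runit_inv X) (runit X) = idm _;
  runit_inv_r : forall X, comp (runit X) (runit_inv X) = idm _;
  runit_nat : forall X X' (f : Hom X X'),
      comp (runit X') (tensm f (idm unit)) = comp f (runit X);
  pentagon : forall W X Y Z,
      comp (assoc W X (tens Y Z)) (assoc (tens W X) Y Z)
      = comp (tensm (idm W) (assoc X Y Z))
             (comp (assoc W (tens X Y) Z) (tensm (assoc W X Y) (idm Z)));
  triangle : forall X Y,
      comp (tensm (idm X) (lunit Y)) (assoc X unit Y) = tensm (runit X) (idm Y)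
}.

Arguments idm {m} X.
Arguments comp {m X Y Z} g f.
Arguments tens {m} X Y.
Arguments tensm {m X X' Y Y'} f g.
Arguments unit {m}.
Arguments assoc {m} X Y Z.
Arguments assoc_inv {m} X Y Z.
Arguments lunit {m} X.
Arguments runit {m} X.

Declare Scope cat_scope.
Delimit Scope cat_scope with cat.
Notation "g ∘ f" := (comp g f) (at level 40, left associativity) : cat_scope.
Notation "X ⊗ Y" := (tens X Y) (at level 30, right associativity) : cat_scope.
Notation "f ⊗m g" := (tensm f g) (at level 30, right associativity) : cat_scope.
Open Scope cat_scope.

Section Defs.
Variable C : MonCat.

Definition is_epi {A B : Ob C} (f : Hom C A B) : Prop :=
  forall Z (u v : Hom C B Z), u ∘ f = v ∘ f -> u = v.

Definition is_iso {A B : Ob C} (f : Hom C A B) : Prop :=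
  exists g : Hom C B A, g ∘ f = idm A /\ f ∘ g = idm B.

Definition is_pushout {A B D P : Ob C} (f : Hom C A B) (g : Hom C A D)
    (i1 : Hom C B P) (i2 : Hom C D P) : Prop :=
  i1 ∘ f = i2 ∘ g /\
  forall Q (u : Hom C B Q) (v : Hom C D Q), u ∘ f = v ∘ g ->
    exists! h : Hom C P Q, h ∘ i1 = u /\ h ∘ i2 = v.

Record Pushout {A B D : Ob C} (f : Hom C A B) (g : Hom C A D) := {
  po_obj : Ob C;
  po_in1 : Hom C B po_obj;
  po_in2 : Hom C D po_obj;
  po_spec : is_pushout f g po_in1 po_in2
}.

Definition HasPushouts : Type :=
  forall (A B D : Ob C) (f : Hom C A B) (g : Hom C A D), Pushout f g.

Record Coalgebra := {
  cH : Ob C;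
  cDelta : Hom C cH (cH ⊗ cH);
  cEps : Hom C cH unit;
  coassoc : assoc cH cH cH ∘ (cDelta ⊗m idm cH) ∘ cDelta
            = (idm cH ⊗m cDelta) ∘ cDelta;
  counit_l : lunit cH ∘ (cEps ⊗m idm cH) ∘ cDelta = idm cH;
  counit_r : runit cH ∘ (idm cH ⊗m cEps) ∘ cDelta = idm cH
}.

Variable H : Coalgebra.
Local Notation HH := (cH H).
Local Notation Δ := (cDelta H).
Local Notation ε := (cEps H).

Definition is_comodule (Y : Ob C) (δ : Hom C Y (Y ⊗ HH)) : Prop :=
  assoc Y HH HH ∘ (δ ⊗m idm HH) ∘ δ = (idm Y ⊗m Δ) ∘ δ /\
  runit Y ∘ (idm Y ⊗m ε) ∘ δ = idm Y.

Definition is_comodule_morphism {Y Z : Ob C} (δY : Hom C Y (Y ⊗ HH))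
    (δZ : Hom C Z (Z ⊗ HH)) (g : Hom C Y Z) : Prop :=
  δZ ∘ g = (g ⊗m idm HH) ∘ δY.

Record PDatum := {
  pX : Ob C;
  pXH : Ob C;
  ppi : Hom C (pX ⊗ HH) pXH;
  prho : Hom C pX pXH
}.

Section Geometric.
Variable po : HasPushouts.
Variable D : PDatum.
Let X := pX D.
Let XH := pXH D.
Let π := ppi D.
Let ρ := prho D.

(** (X•H)•H : pushout of π_X and ρ_X ⊗ H, coprojections ρ_X•H and π_{X•H}. *)
Let P1 := po _ _ _ π (ρ ⊗m idm HH).
(** X•(H⊗H) : pushout of π_X and X ⊗ Δ, coprojections X•Δ and π_{X,Δ}. *)
Let P2 := po _ _ _ π (idm X ⊗m Δ).
(** X•(H•H) : pushout of π_{X,Δ} and π_X ⊗ H (the common domain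
    X⊗H⊗H is identified via the associator), coprojections π'_X, π'_{X,Δ}. *)
Let P3 := po _ _ _ (po_in2 P2 ∘ assoc X HH HH) (π ⊗m idm HH).

Definition GP1 : Prop :=
  exists e : Hom C XH X, e ∘ ρ = idm X /\ e ∘ π = runit X ∘ (idm X ⊗m ε).

Definition GP2 : Prop :=
  exists θ : Hom C (po_obj P3) (po_obj P1),
    is_iso θ /\
    θ ∘ po_in2 P3 = po_in2 P1 /\
    po_in1 P1 ∘ ρ = θ ∘ po_in1 P3 ∘ po_in1 P2 ∘ ρ.

Definition is_geometric : Prop := is_epi π /\ GP1 /\ GP2.
End Geometric.

Definition is_pcom_morphism (D D' : PDatum) (f : Hom C (pX D) (pX D'))
    (fH : Hom C (pXH D) (pXH D')) : Prop :=
  prho D' ∘ f = fH ∘ prho D /\ ppi D' ∘ (f ⊗m idm HH) = fH ∘ ppi D.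

(** [g : Y -> X] is a morphism [I(Y) -> X] for a global comodule [(Y, δ)]. *)
Definition is_morphism_from_global (D : PDatum) {Y : Ob C}
    (δ : Hom C Y (Y ⊗ HH)) (g : Hom C Y (pX D)) : Prop :=
  ppi D ∘ (g ⊗m idm HH) ∘ δ = prho D ∘ g.

Definition is_globalization (D : PDatum) (Y : Ob C) (δ : Hom C Y (Y ⊗ HH))
    (p : Hom C Y (pX D)) : Prop :=
  is_comodule Y δ /\
  is_morphism_from_global D δ p /\
  is_pushout p ((p ⊗m idm HH) ∘ δ) (prho D) (ppi D) /\
  (forall (Z : Ob C) (δ' : Hom C Z (Z ⊗ HH)), is_comodule Z δ' ->
     forall q : Hom C Z (pX D), is_morphism_from_global D δ' q ->
     exists! η : Hom C Z Y, is_comodule_morphism δ' δ η /\ p ∘ η = q).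

(** The trivial partial comodule T(V) = (V, V, V⊗ε, id_V);
    here V ⊗ ε : V ⊗ H -> V means r_V ∘ (id_V ⊗ ε). *)
Definition T (V : Ob C) : PDatum :=
  {| pX := V; pXH := V; ppi := runit V ∘ (idm V ⊗m ε); prho := idm V |}.

End Defs.

Arguments is_epi {C A B} f.
Arguments is_globalization {C H} D Y δ p.
Arguments is_geometric {C H} po D.
Arguments is_pcom_morphism {C H} D D' f fH.
Arguments is_comodule_morphism {C H Y Z} δY δZ g.
Arguments is_comodule {C H} Y δ.
Arguments T {C} H V.

From Pilot Require Import Defs.

(* For T(V) one has X•H = X and ρ = id, and π = V ⊗ ε is split by the free
   coaction: (V ⊗ ε ⊗ H) ∘ (V ⊗ Δ) = id by counitality.  Hence (X•H)•H is the
   pushout of V ⊗ ε along an identity, and pasting the two pushouts that define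
   X•(H•H) along this splitting shows that X•(H•H) is a pushout of the very same
   span; uniqueness of pushouts gives the isomorphism θ of (GP2).  For the same
   reason (GL2) is the pushout of V ⊗ ε along an identity, while (GL3) is the
   couniversal property of the free comodule V ⊗ H with counit V ⊗ ε. *)

Section MonoidalCoherence.
Variable C : MonCat.

Lemma tensm_comp_l (X X' X'' Y : Ob C) (f' : Hom C X' X'') (f : Hom C X X') :
  (f' ∘ f) ⊗m idm Y = f' ⊗m idm Y ∘ f ⊗m idm Y.
Proof. now rewrite <- tensm_comp, comp_idl. Qed.

Lemma tensm_comp_r (X Y Y' Y'' : Ob C) (g' : Hom C Y' Y'') (g : Hom C Y Y') :
  idm X ⊗m (g' ∘ g) = idm X ⊗m g' ∘ idm X ⊗m g.
Proof. now rewrite <- tensm_comp, comp_idl. Qed.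

Lemma tensm_split_l (X X' Y Y' : Ob C) (f : Hom C X X') (g : Hom C Y Y') :
  f ⊗m idm Y' ∘ idm X ⊗m g = f ⊗m g.
Proof. now rewrite <- tensm_comp, comp_idl, comp_idr. Qed.

Lemma tensm_split_r (X X' Y Y' : Ob C) (f : Hom C X X') (g : Hom C Y Y') :
  idm X' ⊗m g ∘ f ⊗m idm Y = f ⊗m g.
Proof. now rewrite <- tensm_comp, comp_idl, comp_idr. Qed.

Lemma assoc_inv_nat (X X' Y Y' Z Z' : Ob C) (f : Hom C X X') (g : Hom C Y Y')
    (h : Hom C Z Z') :
  (f ⊗m g) ⊗m h ∘ assoc_inv X Y Z = assoc_inv X' Y' Z' ∘ f ⊗m g ⊗m h.
Proof.
  rewrite <- (comp_idl _ _ _ ((f ⊗m g) ⊗m h)), <- (assoc_inv_l C X' Y' Z').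
  rewrite <- (comp_assoc _ _ _ _ _ (assoc_inv X' Y' Z')), assoc_nat.
  now rewrite <- !comp_assoc, assoc_inv_r, comp_idr.
Qed.

Lemma assoc_inj (X Y Z W : Ob C) (f g : Hom C W ((X ⊗ Y) ⊗ Z)) :
  assoc X Y Z ∘ f = assoc X Y Z ∘ g -> f = g.
Proof.
  intro E.
  rewrite <- (comp_idl _ _ _ f), <- (comp_idl _ _ _ g), <- (assoc_inv_l C X Y Z).
  now rewrite <- !comp_assoc, E.
Qed.

Lemma tensm_unit_inj (X Y : Ob C) (f g : Hom C X Y) :
  f ⊗m idm unit = g ⊗m idm unit -> f = g.
Proof.
  intro E.
  assert (Erunit : f ∘ runit X = g ∘ runit X) by now rewrite <- !runit_nat, E.
  rewrite <- (comp_idr _ _ _ f), <- (comp_idr _ _ _ g), <- (runit_inv_r C X).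
  now rewrite !comp_assoc, Erunit.
Qed.

(* Kelly's lemma, from the pentagon and the triangle axioms. *)
Lemma runit_tens (X Y : Ob C) :
  idm X ⊗m runit Y ∘ assoc X Y unit = runit (X ⊗ Y).
Proof.
  apply tensm_unit_inj, assoc_inj.
  rewrite <- (triangle C (X ⊗ Y) unit), comp_assoc, <- (tensm_id C X Y), assoc_nat.
  rewrite <- comp_assoc, pentagon, !comp_assoc, <- (tensm_comp C), comp_idl.
  now rewrite (triangle C Y unit), tensm_comp_l, comp_assoc, <- (assoc_nat C).
Qed.

Lemma runit_tens_inv (X Y : Ob C) :
  runit (X ⊗ Y) ∘ assoc_inv X Y unit = idm X ⊗m runit Y.
Proof. now rewrite <- runit_tens, <- comp_assoc, assoc_inv_r, comp_idr. Qed.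

Lemma triangle_inv (X Y : Ob C) :
  runit X ⊗m idm Y ∘ assoc_inv X unit Y = idm X ⊗m lunit Y.
Proof. now rewrite <- triangle, <- comp_assoc, assoc_inv_r, comp_idr. Qed.

Lemma pentagon_inv (W X Y Z : Ob C) :
  assoc (W ⊗ X) Y Z ∘ assoc_inv W X Y ⊗m idm Z ∘ assoc_inv W (X ⊗ Y) Z
  = assoc_inv W X (Y ⊗ Z) ∘ idm W ⊗m assoc X Y Z.
Proof.
  rewrite <- (comp_idl _ _ _ (assoc (W ⊗ X) Y Z)), <- (assoc_inv_l C W X (Y ⊗ Z)).
  rewrite <- (comp_assoc _ _ _ _ _ (assoc_inv W X (Y ⊗ Z))), pentagon, !comp_assoc.
  rewrite <- (comp_assoc _ _ _ _ _ _ (assoc W X Y ⊗m idm Z)), <- tensm_comp_l.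
  rewrite assoc_inv_r, tensm_id, comp_idr.
  now rewrite <- (comp_assoc _ _ _ _ _ _ (assoc W (X ⊗ Y) Z)), assoc_inv_r, comp_idr.
Qed.

End MonoidalCoherence.
From Pilot Require Import Defs.

Section Pushouts.
Context {C : MonCat}.

Lemma pushout_ext {A B D P Q : Ob C} {f : Hom C A B} {g : Hom C A D}
    {i1 : Hom C B P} {i2 : Hom C D P} {h k : Hom C P Q} :
  is_pushout C f g i1 i2 -> h ∘ i1 = k ∘ i1 -> h ∘ i2 = k ∘ i2 -> h = k.
Proof.
  intros [Hsq Huniv] E1 E2.
  destruct (Huniv Q (h ∘ i1) (h ∘ i2)) as [x [_ Hx]].
  { now rewrite <- !comp_assoc, Hsq. }
  transitivity x; [symmetry|]; apply Hx; auto.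
Qed.

Lemma pushout_along_idm (A B : Ob C) (f : Hom C A B) :
  is_pushout C f (idm A) (idm B) f.
Proof.
  split; [now rewrite comp_idl, comp_idr|].
  intros Q u v E. exists u.
  split; [split; [apply comp_idr | now rewrite E, comp_idr]|].
  intros h [Eh _]. now rewrite <- Eh, comp_idr.
Qed.

Lemma pushout_iso_leg {A B D D' P : Ob C} {f : Hom C A B} {g : Hom C A D}
    {i1 : Hom C B P} {i2 : Hom C D P} {b : Hom C D D'} {a : Hom C D' D} :
  a ∘ b = idm D -> b ∘ a = idm D' ->
  is_pushout C f g i1 i2 -> is_pushout C f (b ∘ g) i1 (i2 ∘ a).
Proof.
  intros Eab Eba [Hsq Huniv]. split.
  - now rewrite <- comp_assoc, (comp_assoc _ _ _ _ _ a), Eab, comp_idl.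
  - intros Q u v E.
    destruct (Huniv Q u (v ∘ b)) as [h [[Eh1 Eh2] Hh]]; [now rewrite E, comp_assoc|].
    exists h. split; [split; [exact Eh1|]|].
    + now rewrite comp_assoc, Eh2, <- comp_assoc, Eba, comp_idr.
    + intros h' [E1 E2]. apply Hh. split; [exact E1|].
      now rewrite <- E2, <- !comp_assoc, Eab, comp_idr.
Qed.

Lemma pushout_paste {A B D E P Q : Ob C} {f : Hom C A B} {g : Hom C A D}
    {h : Hom C D E} {i1 : Hom C B P} {i2 : Hom C D P} {k1 : Hom C P Q}
    {k2 : Hom C E Q} :
  is_pushout C f g i1 i2 -> is_pushout C i2 h k1 k2 ->
  is_pushout C f (h ∘ g) (k1 ∘ i1) k2.
Proof.
  intros HP1 HP2. pose proof HP1 as [Hsq1 Huniv1]. destruct HP2 as [Hsq2 Huniv2]. split.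
  - now rewrite <- !comp_assoc, Hsq1, !comp_assoc, Hsq2.
  - intros R u v Euv.
    destruct (Huniv1 R u (v ∘ h)) as [m [[Em1 Em2] _]]; [now rewrite Euv, comp_assoc|].
    destruct (Huniv2 R m v) as [n [[En1 En2] Hn]]; [exact Em2|].
    exists n. split; [split; [now rewrite comp_assoc, En1 | exact En2]|].
    intros n' [E1 E2]. apply Hn. split; [|exact E2].
    apply (pushout_ext HP1).
    + now rewrite <- comp_assoc, E1, Em1.
    + now rewrite <- comp_assoc, Hsq2, comp_assoc, E2, Em2.
Qed.

Lemma pushout_unique {A B D P P' : Ob C} {f : Hom C A B} {g : Hom C A D}
    {i1 : Hom C B P} {i2 : Hom C D P} {i1' : Hom C B P'} {i2' : Hom C D P'} :
  is_pushout C f g i1 i2 -> is_pushout C f g i1' i2' ->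
  exists θ : Hom C P P', is_iso C θ /\ θ ∘ i1 = i1' /\ θ ∘ i2 = i2'.
Proof.
  intros HP HP'.
  destruct (proj2 HP P' i1' i2') as [θ [[E1 E2] _]]; [apply HP'|].
  destruct (proj2 HP' P i1 i2) as [θ' [[E1' E2'] _]]; [apply HP|].
  exists θ. split; [exists θ'; split|split; assumption].
  - apply (pushout_ext HP); rewrite comp_idl, <- comp_assoc; congruence.
  - apply (pushout_ext HP'); rewrite comp_idl, <- comp_assoc; congruence.
Qed.

End Pushouts.

Section FreeComodules.
Variables (C : MonCat) (H : Coalgebra C).
Local Notation HH := (cH H).
Local Notation Δ := (cDelta H).
Local Notation ε := (cEps H).

Definition free_coact (V : Ob C) : Hom C (V ⊗ HH) ((V ⊗ HH) ⊗ HH) :=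
  assoc_inv V HH HH ∘ (idm V ⊗m Δ).

Definition tens_counit (V : Ob C) : Hom C (V ⊗ HH) V :=
  runit V ∘ (idm V ⊗m ε).

Lemma free_comodule (V : Ob C) : is_comodule (H := H) (V ⊗ HH) (free_coact V).
Proof.
  unfold free_coact. split.
  - rewrite tensm_comp_l, !comp_assoc.
    rewrite <- (comp_assoc _ _ _ _ _ _ ((idm V ⊗m Δ) ⊗m idm HH)).
    rewrite assoc_inv_nat, !comp_assoc, pentagon_inv, <- !comp_assoc, <- !tensm_comp_r.
    rewrite (comp_assoc C _ _ _ _ (assoc HH HH HH)), coassoc, <- (tensm_id C V HH).
    now rewrite comp_assoc, assoc_inv_nat, <- comp_assoc, <- tensm_comp_r.
  - replace (idm (V ⊗ HH) ⊗m ε) with ((idm V ⊗m idm HH) ⊗m ε) by now rewrite tensm_id.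
    rewrite !comp_assoc, <- (comp_assoc _ _ _ _ _ _ ((idm V ⊗m idm HH) ⊗m ε)).
    rewrite assoc_inv_nat, comp_assoc, runit_tens_inv, <- !tensm_comp_r, counit_r.
    apply tensm_id.
Qed.

Lemma tens_counit_free_coact (V : Ob C) :
  tens_counit V ⊗m idm HH ∘ free_coact V = idm (V ⊗ HH).
Proof.
  unfold tens_counit, free_coact.
  rewrite tensm_comp_l, !comp_assoc.
  rewrite <- (comp_assoc _ _ _ _ _ _ ((idm V ⊗m ε) ⊗m idm HH)).
  rewrite assoc_inv_nat, comp_assoc, triangle_inv, <- !tensm_comp_r, counit_l.
  apply tensm_id.
Qed.

Lemma tens_counit_nat (V W : Ob C) (f : Hom C V W) :
  tens_counit W ∘ f ⊗m idm HH = f ∘ tens_counit V.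
Proof.
  unfold tens_counit.
  rewrite <- comp_assoc, tensm_split_r, <- (tensm_split_l C), !comp_assoc.
  now rewrite runit_nat.
Qed.

Lemma free_coact_nat (V W : Ob C) (f : Hom C V W) :
  is_comodule_morphism (free_coact V) (free_coact W) (f ⊗m idm HH).
Proof.
  unfold is_comodule_morphism, free_coact.
  rewrite <- comp_assoc, tensm_split_r, <- (tensm_split_l C), !comp_assoc.
  now rewrite <- (tensm_id C HH HH), assoc_inv_nat.
Qed.

Lemma comodule_morphism_comp {X Y Z : Ob C} {δX : Hom C X (X ⊗ HH)}
    {δY : Hom C Y (Y ⊗ HH)} {δZ : Hom C Z (Z ⊗ HH)} {g : Hom C Y Z}
    {f : Hom C X Y} :
  is_comodule_morphism δY δZ g -> is_comodule_morphism δX δY f ->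
  is_comodule_morphism δX δZ (g ∘ f).
Proof.
  unfold is_comodule_morphism. intros Eg Ef.
  now rewrite comp_assoc, Eg, <- comp_assoc, Ef, comp_assoc, tensm_comp_l.
Qed.

Lemma coaction_comodule_morphism (Z : Ob C) (δ : Hom C Z (Z ⊗ HH)) :
  is_comodule (H := H) Z δ -> is_comodule_morphism δ (free_coact Z) δ.
Proof.
  intros [Hcoassoc _]. unfold is_comodule_morphism, free_coact.
  rewrite <- comp_assoc, <- Hcoassoc, <- !comp_assoc.
  now rewrite (comp_assoc _ _ _ _ _ (assoc_inv Z HH HH)), assoc_inv_l, comp_idl.
Qed.

Lemma free_comodule_couniversal (V Z : Ob C) (δ : Hom C Z (Z ⊗ HH)) :
  is_comodule (H := H) Z δ -> forall q : Hom C Z V,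
  exists! η : Hom C Z (V ⊗ HH),
    is_comodule_morphism δ (free_coact V) η /\ tens_counit V ∘ η = q.
Proof.
  intros Hδ q. exists (q ⊗m idm HH ∘ δ). split; [split|].
  - apply (comodule_morphism_comp (δY := free_coact Z));
      [apply free_coact_nat | now apply coaction_comodule_morphism].
  - destruct Hδ as [_ Hcounit]. fold (tens_counit Z) in Hcounit.
    now rewrite comp_assoc, tens_counit_nat, <- comp_assoc, Hcounit, comp_idr.
  - intros η [Hη Eη]. unfold is_comodule_morphism in Hη.
    rewrite <- Eη, tensm_comp_l, <- comp_assoc, <- Hη, comp_assoc.
    now rewrite tens_counit_free_coact, comp_idl.
Qed.

End FreeComodules.

Arguments free_coact {C} H V.
Arguments tens_counit {C} H V.

Section TrivialPartialComodule.
Variables (C : MonCat) (po : HasPushouts C) (H : Coalgebra C).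
Local Notation HH := (cH H).

Lemma T_GP2 (V : Ob C) : GP2 po (T H V).
Proof.
  unfold GP2; simpl. fold (tens_counit H V).
  destruct (po _ _ _ (tens_counit H V) (idm V ⊗m cDelta H)) as [P2 j1 j2 HP2]; simpl.
  destruct (po _ _ _ (j2 ∘ assoc V HH HH) (tens_counit H V ⊗m idm HH)) as [P3 k1 k2 HP3]; simpl.
  destruct (po _ _ _ (tens_counit H V) (idm V ⊗m idm HH)) as [P1 l1 l2 HP1]; simpl.
  rewrite tensm_id in HP1.
  (* The outer leg of the pasted rectangle is (V ⊗ ε ⊗ H) ∘ (V ⊗ Δ) = id. *)
  assert (HP3' : is_pushout C (tens_counit H V) (idm (V ⊗ HH)) (k1 ∘ j1) k2).
  { rewrite <- (tens_counit_free_coact C H V).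
    apply (pushout_paste (pushout_iso_leg (assoc_inv_r C V HH HH) (assoc_inv_l C V HH HH) HP2)).
    exact HP3. }
  destruct (pushout_unique HP3' HP1) as [θ [Hθ [E1 E2]]].
  exists θ. split; [exact Hθ | split; [exact E2|]].
  now rewrite !comp_idr, <- comp_assoc.
Qed.

Lemma T_geometric (V : Ob C) :
  is_epi (tens_counit H V) -> is_geometric po (T H V).
Proof.
  intro Hepi. split; [exact Hepi | split; [|apply T_GP2]].
  exists (idm V). split; apply comp_idl.
Qed.

Lemma T_globalization (V : Ob C) :
  is_globalization (T H V) (V ⊗ HH) (free_coact H V) (tens_counit H V).
Proof.
  split; [apply free_comodule | split; [|split]].
  - unfold is_morphism_from_global; simpl.
    now rewrite <- comp_assoc, tens_counit_free_coact, comp_idr, comp_idl.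
  - simpl. rewrite tens_counit_free_coact. apply pushout_along_idm.
  - intros Z δ Hδ q _. apply free_comodule_couniversal, Hδ.
Qed.

Lemma T_pcom_morphism (V W : Ob C) (f : Hom C V W) :
  is_pcom_morphism (T H V) (T H W) f f.
Proof.
  split; simpl; [now rewrite comp_idl, comp_idr | apply tens_counit_nat].
Qed.

End TrivialPartialComodule.

Theorem proposition3p10 (C : MonCat) (po : HasPushouts C) (H : Coalgebra C)
  (Hepi : forall V : Ob C, is_epi (runit V ∘ (idm V ⊗m cEps H))) :
  (* T(V) is a geometric partial comodule, globalizable, with globalization
     the free comodule (V ⊗ H, V ⊗ Δ) and p = V ⊗ ε *)
  (forall V : Ob C,
     is_geometric po (T H V) /\
     is_globalization (T H V) (V ⊗ cH H) (assoc_inv V (cH H) (cH H) ∘ (idm V ⊗m cDelta H))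
                      (runit V ∘ (idm V ⊗m cEps H))) /\
  (* T is a functor C -> PCom^H_gl (T f = (f, f)), and G(T f) = f ⊗ H *)
  (forall (V W : Ob C) (f : Hom C V W),
     is_pcom_morphism (T H V) (T H W) f f /\
     is_comodule_morphism (H := H)
       (assoc_inv V (cH H) (cH H) ∘ (idm V ⊗m cDelta H))
       (assoc_inv W (cH H) (cH H) ∘ (idm W ⊗m cDelta H))
                          (f ⊗m idm (cH H)) /\
     (runit W ∘ (idm W ⊗m cEps H)) ∘ (f ⊗m idm (cH H))
       = f ∘ (runit V ∘ (idm V ⊗m cEps H))).
Proof.
  split.
  - intro V. split; [apply T_geometric, Hepi | apply T_globalization].
  - intros V W f. split; [apply T_pcom_morphism|].
    split; [apply free_coact_nat | apply tens_counit_nat].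
Qed.
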